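(* Let $G$ be a Hamiltonian graph which is not a complete graph of odd order. Then $G$ has an IPD.
   Context: All graphs are finite and simple. A graph of order $n$ is Hamiltonian if it contains a cycle of order $n$ (through all vertices). The order of a path is its number of vertices. A path $P$ in $G$ is induced if the subgraph of $G$ induced on $V(P)$ is exactly $P$. A graph $G$ has an IPD (induced path decomposition) if $V(G)$ can be partitioned into sets $V_1,\dots,V_t$ such that each $G[V_i]$ is a path of order at least $2$. *)

From mathcomp Require Import all_boot.
Set Implicit Arguments. Unset Strict Implicit. Unset Printing Implicit Defensive.

Definition simple_graph (T : finType) (e : rel T) : Prop :=
  symmetric e /\ irreflexive e.

Definition hamiltonian (T : finType) (e : rel T) : Prop :=
  exists s : seq T,
    [/\ uniq s, (forall x : T, x \in s), 3 <= size s & cycle e s].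

Definition complete_odd (T : finType) (e : rel T) : Prop :=
  (forall x y : T, x != y -> e x y) /\ odd #|T|.

Definition induced_path (T : finType) (e : rel T) (p : seq T) : Prop :=
  uniq p /\
  forall i j : nat, i < size p -> j < size p -> forall x0 : T,
    e (nth x0 p i) (nth x0 p j) = ((i == j.+1) || (j == i.+1)).

Definition has_IPD (T : finType) (e : rel T) : Prop :=
  exists P : seq (seq T),
    [/\ uniq (flatten P), (forall x : T, x \in flatten P) &
        (forall p, p \in P -> 2 <= size p /\ induced_path e p)].

From mathcomp Require Import all_boot.
Set Implicit Arguments. Unset Strict Implicit. Unset Printing Implicit Defensive.

(* Along a Hamiltonian cycle of even order, alternate edges give a decomposition
   into induced paths of order 2.  If the order is odd, the graph is not complete,
   so some vertex x has a non-neighbour y; write the cycle as x b c d ... z.  If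
   x is not adjacent to c, take the induced path x b c and pair off the rest along
   the cycle; likewise with z x b if z is not adjacent to b.  Otherwise, if x is
   adjacent to d, take the edge b c and recurse on the shorter odd cycle
   x d ... z, which still contains y; if not, x c d and b z are induced paths and
   the remaining vertices again pair off along the cycle. *)

Lemma cycle_sorted (T : Type) (e : rel T) s : cycle e s -> sorted e s.
Proof. by case: s => // x s; rewrite /cycle rcons_path => /andP[]. Qed.

Section InducedPathDecomposition.

Variables (T : finType) (e : rel T).
Hypotheses (e_sym : symmetric e) (e_irr : irreflexive e).

Lemma induced_path_pair x y : e x y -> induced_path e [:: x; y].
Proof.
move=> exy; split; first by rewrite /= inE andbT; apply: contraTneq exy => ->; rewrite e_irr.
by case=> [|[|i]] [|[|j]] //= _ _ _; rewrite ?e_irr // e_sym.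
Qed.

Lemma induced_path_triple a b c :
  a != c -> e a b -> e b c -> ~~ e a c -> induced_path e [:: a; b; c].
Proof.
move=> neq_ac eab ebc neac; split.
  rewrite /= !inE negb_or neq_ac !andbT.
  by apply/andP; split; [apply: contraTneq eab | apply: contraTneq ebc] => ->; rewrite e_irr.
case=> [|[|[|i]]] [|[|[|j]]] //= _ _ _;
  by rewrite ?e_irr ?eab ?ebc ?(negbTE neac) // e_sym ?eab ?ebc ?(negbTE neac).
Qed.

Definition ipd_of (s : seq T) (P : seq (seq T)) : Prop :=
  perm_eq (flatten P) s /\ forall p, p \in P -> 2 <= size p /\ induced_path e p.

Lemma ipd_of_cons p s P :
  2 <= size p -> induced_path e p -> ipd_of s P -> ipd_of (p ++ s) (p :: P).
Proof.
move=> size_p ind_p [perm_P ind_P]; split; first by rewrite /= perm_cat2l.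
by move=> q; rewrite inE => /predU1P [-> | /ind_P].
Qed.

Lemma ipd_of_perm s t P : perm_eq s t -> ipd_of s P -> ipd_of t P.
Proof. by move=> perm_st [perm_P ind_P]; split => //; apply: perm_trans perm_st. Qed.

Fixpoint pairs (s : seq T) : seq (seq T) :=
  if s is x :: y :: t then [:: x; y] :: pairs t else [::].

Lemma ipd_of_even_path s : sorted e s -> ~~ odd (size s) -> ipd_of s (pairs s).
Proof.
have [n] := ubnP (size s); elim: n s => // n IH [|x [|y t]] //= size_t.
move=> /andP[exy path_t]; rewrite negbK => even_t.
apply: (ipd_of_cons (p := [:: x; y])) => //; first exact: induced_path_pair.
by apply: IH; rewrite ?(path_sorted path_t) // ltnW.
Qed.

Lemma ipd_of_triple_path a b c r :
    uniq [:: a, b, c & r] -> path e a [:: b, c & r] -> ~~ e a c -> ~~ odd (size r) ->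
  ipd_of [:: a, b, c & r] ([:: a; b; c] :: pairs r).
Proof.
move=> uniq_abcr /and3P[eab ebc path_r] neac even_r.
have neq_ac : a != c.
  by apply: contraTneq uniq_abcr => ->; rewrite /= in_cons mem_head orbT.
apply: (ipd_of_cons (p := [:: a; b; c])) => //; first exact: induced_path_triple.
exact: ipd_of_even_path (path_sorted path_r) even_r.
Qed.

Lemma ipd_of_two_chords x b c d z t :
    uniq [:: x, b, c, d & rcons t z] -> e x c -> e c d -> ~~ e x d -> e z b ->
    sorted e t -> ~~ odd (size t) ->
  ipd_of [:: x, b, c, d & rcons t z] ([:: x; c; d] :: [:: b; z] :: pairs t).
Proof.
move=> uniq_s exc ecd nexd ezb sorted_t even_t.
have neq_xd : x != d.
  by apply: contraTneq uniq_s => ->; rewrite /= !in_cons eqxx orTb !orbT.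
have perm_xcd : perm_eq ([:: x; c; d] ++ [:: b; z] ++ t) [:: x, b, c, d & rcons t z].
  by rewrite perm_cons perm_sym (perm_catCA [:: b] [:: c; d]) !perm_cons perm_rcons.
apply: (ipd_of_perm perm_xcd); apply: ipd_of_cons => //; first exact: induced_path_triple.
apply: ipd_of_cons => //; first by apply: induced_path_pair; rewrite e_sym.
exact: ipd_of_even_path.
Qed.

Lemma ipd_of_odd_cycle x y s :
    uniq (x :: s) -> cycle e (x :: s) -> ~~ odd (size s) -> y \in s -> ~~ e x y ->
  exists P, ipd_of (x :: s) P.
Proof.
move=> + + + + nexy; have [n] := ubnP (size s); elim: n s => // n IH.
case=> [|b [|c r]] // size_s uniq_s cycle_s even_s y_s.
have /and3P[exb ebc path_r] : [&& e x b, e b c & path e c (rcons r x)] := cycle_s.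
have [exc | nexc] := boolP (e x c); last first.
  exists ([:: x; b; c] :: pairs r); apply: ipd_of_triple_path => //.
    by move: cycle_s; rewrite /cycle rcons_path => /andP[].
  by rewrite /= negbK in even_s.
have y_r : y \in r.
  by move: y_s; rewrite !inE => /or3P[] // /eqP eq_yb; rewrite eq_yb ?exb ?exc in nexy.
case/lastP: r => [|r' z] in size_s uniq_s cycle_s even_s y_s path_r y_r *; first by [].
have ezx : e z x by move: path_r; rewrite rcons_path last_rcons => /andP[].
have [ezb | nezb] := boolP (e z b); last first.
  exists ([:: z; x; b] :: pairs (c :: r')).
  have perm_z : perm_eq [:: z, x, b, c & r'] [:: x, b, c & rcons r' z].
    by rewrite perm_sym (perm_rcons z [:: x, b, c & r']).
  apply: (ipd_of_perm perm_z (ipd_of_triple_path _ _ _ _)) => //.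
  - by rewrite (perm_uniq perm_z).
  - by rewrite /= ezx exb ebc; move: path_r; rewrite !rcons_path => /andP[/andP[]].
  - by move: even_s; rewrite /= size_rcons /= !negbK.
case: r' => [|d t] in size_s uniq_s even_s path_r y_r {y_s cycle_s} *.
  by move: y_r; rewrite mem_seq1 => /eqP eq_yz; rewrite eq_yz e_sym ezx in nexy.
have /andP[ecd path_t] : e c d && path e d (rcons (rcons t z) x) := path_r.
have [exd | nexd] := boolP (e x d).
  have perm_bc : perm_eq ([:: b; c] ++ [:: x, d & rcons t z]) [:: x, b, c, d & rcons t z].
    exact: permEl (perm_catCA [:: b; c] [:: x] _).
  have [P ipd_P] : exists P, ipd_of [:: x, d & rcons t z] P.
    apply: (IH _ _ _ _ _ y_r).
    - by move: size_s => /= /ltnW.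
    - by move: uniq_s; rewrite -(perm_uniq perm_bc) cat_uniq => /and3P[].
    - by rewrite /= exd.
    - by move: even_s; rewrite /= !negbK.
  exists ([:: b; c] :: P).
  exact: (ipd_of_perm perm_bc (ipd_of_cons _ (induced_path_pair ebc) ipd_P)).
exists ([:: x; c; d] :: [:: b; z] :: pairs t); apply: ipd_of_two_chords => //.
- by move: path_t; rewrite !rcons_path => /andP[/andP[/path_sorted]].
- by move: even_s; rewrite /= size_rcons /= !negbK.
Qed.

Lemma exists_non_edge (s : seq T) :
    uniq s -> (forall x, x \in s) -> odd (size s) -> ~ complete_odd e ->
  exists x y, x != y /\ ~~ e x y.
Proof.
move=> uniq_s all_s odd_s not_complete.
case: (pickP (fun xy : T * T => (xy.1 != xy.2) && ~~ e xy.1 xy.2)) => [[x y] /andP[]|no_pair].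
  by exists x, y.
case: not_complete; split=> [x y neq_xy|].
  by have := no_pair (x, y); rewrite /= neq_xy => /negbFE.
suff -> : #|T| = size s by [].
by rewrite -(card_uniqP uniq_s); apply: eq_card => z; rewrite all_s.
Qed.

Lemma has_IPD_of_ipd (s : seq T) P : uniq s -> (forall x, x \in s) -> ipd_of s P -> has_IPD e.
Proof.
move=> uniq_s all_s [perm_P ind_P]; exists P.
by split=> // [|x]; rewrite ?(perm_uniq perm_P) ?(perm_mem perm_P).
Qed.

End InducedPathDecomposition.

Theorem mainTheorem3 (T : finType) (e : rel T) :
  simple_graph e -> hamiltonian e -> ~ complete_odd e -> has_IPD e.
Proof.
move=> [e_sym e_irr] [s [uniq_s all_s _ cycle_s]] not_complete.
have [odd_s | even_s] := boolP (odd (size s)); last first.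
  exact: has_IPD_of_ipd uniq_s all_s (ipd_of_even_path e_sym e_irr (cycle_sorted cycle_s) even_s).
have [x [y [neq_xy nexy]]] := exists_non_edge uniq_s all_s odd_s not_complete.
have [i s' rot_s] := rot_to (all_s x).
have y_s' : y \in s'.
  by have := all_s y; rewrite -(mem_rot i s) rot_s inE eq_sym (negbTE neq_xy).
have [|||P ipd_P] := ipd_of_odd_cycle e_sym e_irr (s := s') _ _ _ y_s' nexy.
- by rewrite -rot_s rot_uniq.
- by rewrite -rot_s rot_cycle.
- by move: odd_s; rewrite -(size_rot i) rot_s.
apply: (has_IPD_of_ipd uniq_s all_s (ipd_of_perm _ ipd_P)).
by rewrite -rot_s perm_rot.
Qed.
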